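(* Let $\phi=\tilde p/p$ be an irreducible rational inner function on $\mathbb{D}^3$ of degree $(m,n,1)$ with $p(z)=p_1(z_1,z_2)+z_3p_2(z_1,z_2)$, $\tilde p(z)=z_3\tilde p_1(z_1,z_2)+\tilde p_2(z_1,z_2)$, and suppose $\mathcal{Z}_p\cap\mathbb{T}^3$ is finite. Then for each $(\tau_1,\tau_2,\zeta_3)\in\mathcal{Z}_p\cap\mathbb{T}^3$, \[\phi^*(\tau_1,\tau_2,\tau_3)=\frac{\tilde p_2(\tau_1,\tau_2)}{p_1(\tau_1,\tau_2)}\in\mathbb{T}\quad\text{for all }\tau_3\in\mathbb{T},\] where $\phi^*$ denotes the nontangential limit of $\phi$.
   Context: A rational inner function (RIF) on $\mathbb{D}^3$ is a rational function holomorphic on the tridisk with unimodular radial limits a.e. on $\mathbb{T}^3$; it is written $\phi=\tilde p/p$ with $p$ zero-free on $\mathbb{D}^3$, $p,\tilde p$ without common factors. For degree $(m,n,1)$, $\tilde p(z)=z_1^mz_2^nz_3\overline{p(1/\bar z_1,1/\bar z_2,1/\bar z_3)}$ and $\tilde p_j(z_1,z_2)=z_1^mz_2^n\overline{p_j(1/\bar z_1,1/\bar z_2)}$. The nontangential limit $\phi^*(\tau)$ at $\tau\in\mathbb{T}^3$ is the limit as $z\to\tau$ in $\mathbb{D}^3$ with $\|z-\tau\|\le C(1-\|z\|)$; it exists and is unimodular at every $\tau\in\mathbb{T}^3$ for every RIF. $\mathcal{Z}_p$ is the zero set of $p$. *)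

From HB Require Import structures.
From mathcomp Require Import all_boot all_order all_algebra.
From mathcomp Require Import complex reals.
Set Implicit Arguments. Unset Strict Implicit. Unset Printing Implicit Defensive.
Import Order.TTheory GRing.Theory Num.Theory.
Local Open Scope ring_scope.
Local Open Scope complex_scope.

Section Defs.
Variable R : realType.
Local Notation C := (R[i]).

(* A polynomial of multidegree <= (m,n,1) in (z1,z2,z3), given by its
   coefficients: p(z) = sum_{i,j,k} a i j k z1^i z2^j z3^k. *)
Definition coef3 (m n : nat) := 'I_m.+1 -> 'I_n.+1 -> 'I_2 -> C.

Definition peval3 m n (a : coef3 m n) (z1 z2 z3 : C) : C :=
  \sum_(i < m.+1) \sum_(j < n.+1) \sum_(k < 2)
     a i j k * z1 ^+ i * z2 ^+ j * z3 ^+ k.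

(* reflection at degree (m,n,1):
   tilde p(z) = z1^m z2^n z3 * conj(p(1/conj z1, 1/conj z2, 1/conj z3)),
   written on coefficients. *)
Definition refl3 m n (a : coef3 m n) : coef3 m n :=
  fun i j k => (a (rev_ord i) (rev_ord j) (rev_ord k))^*.

(* the bivariate pieces: p(z) = p_1(z1,z2) + z3 p_2(z1,z2);
   pk a k is the coefficient of z3^k, so p_1 = pk a 0, p_2 = pk a 1,
   and tilde p_2 = pk (refl3 a) 0 (tilde p = z3 tilde p_1 + tilde p_2). *)
Definition pk m n (a : coef3 m n) (k : 'I_2) (z1 z2 : C) : C :=
  \sum_(i < m.+1) \sum_(j < n.+1) a i j k * z1 ^+ i * z2 ^+ j.

(* the same polynomial as an element of C[z1][z2][z3] (innermost variable z1) *)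
Definition poly3 m n (a : coef3 m n) : {poly {poly {poly C}}} :=
  \sum_(i < m.+1) \sum_(j < n.+1) \sum_(k < 2)
     (a i j k)%:P%:P%:P * ('X^i)%:P%:P * ('X^j)%:P * 'X^k.

Definition no_common_factor m n (a : coef3 m n) : Prop :=
  forall q r1 r2 : {poly {poly {poly C}}},
    poly3 a = q * r1 -> poly3 (refl3 a) = q * r2 -> q \is a GRing.unit.

Definition phi3 m n (a : coef3 m n) (z1 z2 z3 : C) : C :=
  peval3 (refl3 a) z1 z2 z3 / peval3 a z1 z2 z3.

Definition nrm3 (z1 z2 z3 : C) : C := Num.max `|z1| (Num.max `|z2| `|z3|).

Definition nt_limit (f : C -> C -> C -> C) (t1 t2 t3 L : C) : Prop :=
  forall c : C, 0 < c -> forall eps : C, 0 < eps ->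
  exists2 d : C, 0 < d &
    forall z1 z2 z3 : C, `|z1| < 1 -> `|z2| < 1 -> `|z3| < 1 ->
      nrm3 (z1 - t1) (z2 - t2) (z3 - t3) <= c * (1 - nrm3 z1 z2 z3) ->
      nrm3 (z1 - t1) (z2 - t2) (z3 - t3) < d ->
      `|f z1 z2 z3 - L| < eps.

End Defs.

(* As p has no zeros in
   D^3, |p_2| <= |p_1| on the closed bidisk, and at a zero (t_1, t_2, zeta_3) of
   p on T^3 equality |p_1(t)| = |p_2(t)| holds.  Moreover p_1(t) <> 0: otherwise
   p_2(t) = 0 as well and p(t_1, t_2, .) vanishes on all of T, against the
   finiteness of Z_p /\ T^3.  Since |p~_2| = |p_2| on T^2, the value
   p~_2(t) / p_1(t) is unimodular.
   For the limit, phi = p~_2/p_1 + z_3 F / (p_1 p) with F = p_1 p~_1 - p_2 p~_2.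
   On T^2, F = z_1^m z_2^n (|p_1|^2 - |p_2|^2) is a unimodular monomial times a
   nonnegative function vanishing at t, so along both coordinate circles through
   t the complex derivative of F must vanish: F(z) = O(|z - t|^2).  In a
   nontangential approach region |p| >= |p_1| (1 - |z_3|) >= c |z - t|, hence the
   second term is O(|z - t|), while p~_2/p_1 is Lipschitz near t. *)

From HB Require Import structures.
From mathcomp Require Import all_boot all_order all_algebra.
From mathcomp Require Import complex reals ring.
Set Implicit Arguments. Unset Strict Implicit. Unset Printing Implicit Defensive.
Import Order.TTheory GRing.Theory Num.Theory.
Local Open Scope ring_scope.

Section QuadraticExpansion.
Variables (D : numDomainType) (t1 t2 : D).

Definition quad_expansion (f : D -> D -> D) : Prop :=
  exists a1 a2 K : D, 0 <= K /\ forall x y, `|x - t1| + `|y - t2| <= 1 ->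
    `|f x y - f t1 t2 - (a1 * (x - t1) + a2 * (y - t2))|
      <= K * (`|x - t1| + `|y - t2|) ^+ 2.

Lemma quad_expansion_ext f g : f =2 g -> quad_expansion f -> quad_expansion g.
Proof.
by move=> fg [a1 [a2 [K [K0 fK]]]]; exists a1, a2, K; split=> // x y /fK; rewrite !fg.
Qed.

Lemma quad_expansion_cst c : quad_expansion (fun _ _ => c).
Proof. by exists 0, 0, 0; split=> // x y _; rewrite !mul0r subrr addr0 subr0 normr0. Qed.

Lemma quad_expansion_fst : quad_expansion (fun x _ => x).
Proof. by exists 1, 0, 0; split=> // x y _; rewrite !mul0r mul1r addr0 subrr normr0. Qed.

Lemma quad_expansion_snd : quad_expansion (fun _ y => y).
Proof. by exists 0, 1, 0; split=> // x y _; rewrite !mul0r mul1r add0r subrr normr0. Qed.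

Lemma quad_expansion_lipschitz f : quad_expansion f ->
  exists2 L, 0 <= L & forall x y, `|x - t1| + `|y - t2| <= 1 ->
    `|f x y - f t1 t2| <= L * (`|x - t1| + `|y - t2|).
Proof.
move=> [a1 [a2 [K [K0 fK]]]]; exists (K + (`|a1| + `|a2|)) => [|x y d1].
  by rewrite !addr_ge0.
have d0 : 0 <= `|x - t1| + `|y - t2| by rewrite addr_ge0.
rewrite -[f x y - _](subrK (a1 * (x - t1) + a2 * (y - t2))) mulrDl.
apply: le_trans (ler_normD _ _) _; apply: lerD.
  by apply: le_trans (fK _ _ d1) _; rewrite ler_wpM2l // ler_iXnr.
apply: le_trans (ler_normD _ _) _; rewrite !normrM mulrDl.
by apply: lerD; rewrite ler_wpM2l // ?lerDl ?lerDr.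
Qed.

Lemma quad_expansionD f g : quad_expansion f -> quad_expansion g ->
  quad_expansion (fun x y => f x y + g x y).
Proof.
move=> [a1 [a2 [K [K0 fK]]]] [b1 [b2 [L [L0 gL]]]].
exists (a1 + b1), (a2 + b2), (K + L); split=> [|x y d1]; first by rewrite addr_ge0.
set u1 := x - t1; set u2 := y - t2.
have -> : f x y + g x y - (f t1 t2 + g t1 t2) - ((a1 + b1) * u1 + (a2 + b2) * u2) =
    (f x y - f t1 t2 - (a1 * u1 + a2 * u2)) + (g x y - g t1 t2 - (b1 * u1 + b2 * u2)).
  by ring.
by apply: le_trans (ler_normD _ _) _; rewrite mulrDl lerD ?fK ?gL.
Qed.

Lemma quad_expansionM f g : quad_expansion f -> quad_expansion g ->
  quad_expansion (fun x y => f x y * g x y).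
Proof.
move=> ef eg; have [Lf Lf0 fLf] := quad_expansion_lipschitz ef.
have [Lg Lg0 gLg] := quad_expansion_lipschitz eg.
move: ef eg => [a1 [a2 [K [K0 fK]]]] [b1 [b2 [L [L0 gL]]]].
set f0 := f t1 t2; set g0 := g t1 t2.
exists (f0 * b1 + g0 * a1), (f0 * b2 + g0 * a2), (`|f0| * L + `|g0| * K + Lf * Lg).
split=> [|x y d1]; first by rewrite !addr_ge0 ?mulr_ge0.
set u1 := x - t1; set u2 := y - t2.
have -> : f x y * g x y - f0 * g0 - ((f0 * b1 + g0 * a1) * u1 + (f0 * b2 + g0 * a2) * u2)
    = f0 * (g x y - g0 - (b1 * u1 + b2 * u2)) + g0 * (f x y - f0 - (a1 * u1 + a2 * u2))
      + (f x y - f0) * (g x y - g0) by ring.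
rewrite [X in _ <= X]mulrDl [X in _ <= X + _]mulrDl.
apply: le_trans (ler_normD _ _) _; apply: lerD.
  apply: le_trans (ler_normD _ _) _; rewrite !normrM -!mulrA.
  by apply: lerD; rewrite ler_wpM2l ?gL ?fK.
by rewrite normrM expr2 mulrACA ler_pM ?fLf ?gLg.
Qed.

Lemma quad_expansionX f k : quad_expansion f -> quad_expansion (fun x y => f x y ^+ k).
Proof.
move=> ef; elim: k => [|k IHk].
  by apply: (quad_expansion_ext _ (quad_expansion_cst 1)) => x y; rewrite expr0.
apply: (quad_expansion_ext _ (quad_expansionM IHk ef)) => x y.
by rewrite exprSr.
Qed.

Lemma quad_expansion_sum N (F : 'I_N -> D -> D -> D) :
  (forall i, quad_expansion (F i)) -> quad_expansion (fun x y => \sum_(i < N) F i x y).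
Proof.
elim: N F => [|N IHN] F eF.
  by apply: (quad_expansion_ext _ (quad_expansion_cst 0)) => x y; rewrite big_ord0.
apply: (quad_expansion_ext _ (quad_expansionD (IHN _ (fun i => eF (widen_ord (leqnSn N) i)))
  (eF ord_max))) => x y.
by rewrite big_ord_recr.
Qed.

End QuadraticExpansion.

Section QuadraticExpansionField.
Variables (D : numFieldType) (t1 t2 : D).

Lemma quad_expansion_norm_lower f : quad_expansion t1 t2 f -> f t1 t2 != 0 ->
  exists2 d, 0 < d <= 1 & forall x y, `|x - t1| + `|y - t2| <= d ->
    `|f t1 t2| <= `|f x y| * 2.
Proof.
move=> /quad_expansion_lipschitz [L L0 fL]; rewrite -normr_gt0 => A0.
set A := `|f t1 t2| in A0 *; have LA0 : 0 < L * 2 + A by rewrite ltr_wpDl ?mulr_ge0.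
exists (A / (L * 2 + A)).
  by rewrite divr_gt0 //= ler_pdivrMr // mul1r lerDr mulr_ge0.
move=> x y dxy; have d1 : `|x - t1| + `|y - t2| <= 1.
  by apply: le_trans dxy _; rewrite ler_pdivrMr // mul1r lerDr mulr_ge0.
have : A - `|f x y| <= A / 2.
  apply: le_trans (lerB_dist _ _) _; rewrite distrC.
  apply: le_trans (fL _ _ d1) _; apply: le_trans (ler_wpM2l L0 dxy) _.
  rewrite mulrCA ler_pM2l // ler_pdivrMr // mulrC ler_pdivlMr ?ltr0n //.
  by rewrite lerDl ltW.
move=> deficit; rewrite -ler_pdivrMr ?ltr0n //.
by rewrite lerBlDr {1}(splitr A) lerD2l in deficit.
Qed.

Lemma quad_expansion_div_lipschitz f g :
  quad_expansion t1 t2 f -> quad_expansion t1 t2 g -> g t1 t2 != 0 ->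
  exists2 d, 0 < d <= 1 & exists2 M, 0 <= M & forall x y,
    `|x - t1| + `|y - t2| <= d ->
    `|f x y / g x y - f t1 t2 / g t1 t2| <= M * (`|x - t1| + `|y - t2|).
Proof.
move=> ef eg g0_neq0; have [d /andP [d0 d1] g_lower] := quad_expansion_norm_lower eg g0_neq0.
have [Lf Lf0 fL] := quad_expansion_lipschitz ef.
have [Lg Lg0 gL] := quad_expansion_lipschitz eg.
set f0 := f t1 t2; set g0 := g t1 t2; have g00 : 0 < `|g0| by rewrite normr_gt0.
exists d; first by rewrite d0 d1.
exists ((Lf * `|g0| + `|f0| * Lg) * 2 / `|g0| ^+ 2).
  by rewrite divr_ge0 ?exprn_ge0 ?mulr_ge0 ?addr_ge0 ?mulr_ge0.
move=> x y dxy; set e := `|x - t1| + `|y - t2|; have e1 : e <= 1 := le_trans dxy d1.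
have gxy0 : 0 < `|g x y|.
  by rewrite -(pmulr_rgt0 _ (ltr0n _ 2)) mulrC (lt_le_trans g00) ?g_lower.
have gxy_neq0 : g x y != 0 by rewrite -normr_gt0.
rewrite (_ : _ - _ = ((f x y - f0) * g0 - f0 * (g x y - g0)) / (g x y * g0)); last first.
  by field; rewrite gxy_neq0 g0_neq0.
rewrite normf_div normrM ler_pdivrMr ?mulr_gt0 //.
apply: le_trans (ler_normB _ _) _; rewrite !normrM.
apply: le_trans (lerD (ler_wpM2r (ltW g00) (fL _ _ e1))
                      (ler_wpM2l (normr_ge0 f0) (gL _ _ e1))) _.
have -> : (Lf * `|g0| + `|f0| * Lg) * 2 / `|g0| ^+ 2 * e * (`|g x y| * `|g0|)
    = (Lf * e * `|g0| + `|f0| * (Lg * e)) * (`|g x y| * 2 / `|g0|).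
  by field; rewrite gt_eqF.
have e0 : 0 <= e by rewrite addr_ge0.
by rewrite -/e ler_peMr ?addr_ge0 ?mulr_ge0 // ler_pdivlMr // mul1r g_lower.
Qed.

End QuadraticExpansionField.

Lemma norm_subX_le (D : numDomainType) (x y : D) k : `|x| <= 1 -> `|y| <= 1 ->
  `|x ^+ k - y ^+ k| <= k%:R * `|x - y|.
Proof.
move=> x1 y1; elim: k => [|k IHk]; first by rewrite subrr normr0 mul0r.
have -> : x ^+ k.+1 - y ^+ k.+1 = x * (x ^+ k - y ^+ k) + (x - y) * y ^+ k.
  by rewrite !exprS; ring.
rewrite [k.+1%:R]mulrSr [X in _ <= X]mulrDl mul1r.
apply: le_trans (ler_normD _ _) _; apply: lerD.
  by rewrite normrM -[X in _ <= X]mul1r ler_pM.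
by rewrite normrM normrX ler_piMr // exprn_ile1.
Qed.

Section SmallScale.
Variable D : numFieldType.

Lemma le0_of_le_small (x K r : D) : 0 < r -> 0 <= K ->
  (forall e, 0 < e -> e <= r -> x <= K * e) -> x <= 0.
Proof.
move=> r0 K0 xK; apply/ler_addgt0Pr => eps eps0; rewrite add0r.
have K1 : 0 < K + 1 by rewrite ltr_wpDl.
have epsK0 : 0 < eps / (K + 1) by rewrite divr_gt0.
have cmp : r >=< eps / (K + 1) by rewrite real_comparable ?gtr0_real.
apply: le_trans (xK (Num.min r (eps / (K + 1))) _ _) _.
- by rewrite comparable_lt_min ?r0.
- by rewrite comparable_ge_min ?lexx.
apply: le_trans (_ : K * (eps / (K + 1)) <= _).
  by rewrite ler_wpM2l // comparable_ge_min // lexx orbT.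
by rewrite mulrCA ger_pMr // ler_pdivrMr // mul1r lerDl.
Qed.

Lemma linear_part_eq0 (g : D -> D) (b K r : D) : 0 < r -> 0 <= K ->
  (forall s, s \is Num.real -> `|s| <= r ->
     0 <= g s /\ `|g s - b * s| <= K * `|s| ^+ 2) -> b = 0.
Proof.
move=> r0 K0 gb; apply/eqP; rewrite -normr_le0.
apply: (le0_of_le_small (K := K * 3) r0); first by rewrite mulr_ge0.
move=> s s0 sr; rewrite -(ler_pM2r s0).
have sR : s \is Num.real := gtr0_real s0.
have [|gs0 gsb] := gb s sR; first by rewrite gtr0_norm.
have sNR : - s \is Num.real by rewrite realN.
have [|gNs0 gNsb] := gb (- s) sNR; first by rewrite normrN gtr0_norm.
rewrite mulrN opprK normrN in gNsb.
rewrite (gtr0_norm s0) in gsb gNsb.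
have gs_le : g s <= K * s ^+ 2 * 2.
  apply: le_trans (_ : g s <= g s + g (- s)) _; first by rewrite lerDl.
  rewrite -[g s + _]ger0_norm ?addr_ge0 //.
  rewrite (_ : g s + g (- s) = (g s - b * s) + (g (- s) + b * s)); last by ring.
  apply: le_trans (ler_normD _ _) _; rewrite mulr_natr mulr2n; exact: lerD gsb gNsb.
have bs : `|b * s| <= K * s ^+ 2 + g s.
  rewrite (_ : b * s = g s - (g s - b * s)); last by ring.
  by apply: le_trans (ler_normB _ _) _; rewrite ger0_norm // addrC lerD2r.
rewrite normrM (gtr0_norm s0) in bs; apply: le_trans bs _.
have -> : K * 3 * s * s = K * s ^+ 2 + K * s ^+ 2 * 2 by ring.
by rewrite lerD2l.
Qed.

End SmallScale.

Section Cayley.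
Variable C : numClosedFieldType.
Implicit Types s : C.

(* Maps the real line onto the unit circle minus -1, with cayley 0 = 1 and
   velocity 2 i there: a supply of infinitely many unimodular points, and a chart
   of the circle. *)
Definition cayley s : C := (1 + 'i * s) / (1 - 'i * s).

Lemma cayley_den_ge1 s : s \is Num.real -> 1 <= `|1 - 'i * s|.
Proof.
move=> sR; rewrite -(@expr_ge1 _ 2) // -mulrN normC2_rect ?realN //.
by rewrite expr1n sqrrN lerDl -real_normK // exprn_ge0.
Qed.

Lemma cayley_den_neq0 s : s \is Num.real -> 1 - 'i * s != 0.
Proof.
move=> /cayley_den_ge1 s1; rewrite -normr_gt0; exact: lt_le_trans ltr01 s1.
Qed.

Lemma norm_cayley s : s \is Num.real -> `|cayley s| = 1.
Proof.
move=> sR; have den0 := cayley_den_neq0 sR; rewrite /cayley.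
have -> : 1 + 'i * s = (1 - 'i * s)^*.
  by rewrite rmorphB rmorph1 rmorphM /= conjCi (conj_Creal sR) mulNr opprK.
by rewrite normf_div norm_conjC divff // normr_eq0.
Qed.

Lemma norm_cayley_sub1 s : s \is Num.real -> `|cayley s - 1| <= 2 * `|s|.
Proof.
move=> sR; have den0 := cayley_den_neq0 sR.
rewrite (_ : cayley s - 1 = 2 * 'i * s / (1 - 'i * s)); last by rewrite /cayley; field.
rewrite normf_div !normrM normCi mulr1 normr_nat ler_pdivrMr ?normr_gt0 //.
by rewrite ler_peMr ?mulr_ge0 ?cayley_den_ge1.
Qed.

Lemma norm_cayley_tangent s : s \is Num.real ->
  `|cayley s - 1 - 2 * 'i * s| <= 2 * `|s| ^+ 2.
Proof.
move=> sR; have den0 := cayley_den_neq0 sR.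
rewrite (_ : cayley s - 1 - 2 * 'i * s = 2 * ('i * 'i) * s ^+ 2 / (1 - 'i * s)).
  rewrite mulCii normf_div normrM (normrX 2 s) normrM normrN normr1 mulr1 normr_nat.
  by rewrite ler_pdivrMr ?normr_gt0 // ler_peMr ?mulr_ge0 ?exprn_ge0 ?cayley_den_ge1.
by rewrite /cayley; field.
Qed.

Lemma cayley_inj : {in Num.real &, injective cayley}.
Proof.
move=> s r sR rR eq_sr.
have cayleyS1 q : q \is Num.real -> cayley q + 1 = 2 / (1 - 'i * q).
  by move=> qR; have := cayley_den_neq0 qR; rewrite /cayley => ?; field.
have two0 : (2 : C) != 0 by rewrite pnatr_eq0.
have : 2 / (1 - 'i * s) = 2 / (1 - 'i * r) by rewrite -!cayleyS1 ?eq_sr.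
move/(mulfI two0) /invr_inj /(congr1 (fun x => 1 - x)).
by rewrite !subKr => /(mulfI (neq0Ci C)).
Qed.

Lemma unit_circle_notin (zs : seq C) : exists2 z : C, `|z| = 1 & z \notin zs.
Proof.
pose cayley_nat k := cayley k%:R.
have cayley_nat_inj : injective cayley_nat.
  by move=> k l /cayley_inj; rewrite !realn => /(_ isT isT) /eqP; rewrite eqr_nat => /eqP.
have [/allP zs_all|/allPn [z /mapP [k _ ->] notin]] :=
  boolP (all (mem zs) (map cayley_nat (iota 0 (size zs).+1))).
  have uniq_cayley : uniq (map cayley_nat (iota 0 (size zs).+1)).
    by rewrite map_inj_uniq ?iota_uniq.
  have := uniq_leq_size uniq_cayley zs_all.
  by rewrite size_map size_iota ltnn.
by exists (cayley_nat k); rewrite ?norm_cayley ?realn.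
Qed.

End Cayley.

Section CircleDerivative.
Variables (C : numClosedFieldType) (h : C -> C) (t al K : C) (m : nat).
Hypotheses (tu : `|t| = 1) (K0 : 0 <= K).
Hypothesis h_expansion :
  forall z, `|z - t| <= 1 -> `|h z - al * (z - t)| <= K * `|z - t| ^+ 2.

Lemma circle_chart_expansion s : s \is Num.real -> `|s| <= 2^-1 ->
  `|(t * cayley s)^* ^+ m * h (t * cayley s) - t^* ^+ m * al * (2 * 'i * t) * s|
    <= (m%:R * (`|al| + K) * 4 + K * 4 + `|al| * 2) * `|s| ^+ 2.
Proof.
move=> sR s_small; set z := t * cayley s; set u := z - t.
have tm1 : `|t^* ^+ m| = 1 by rewrite normrX norm_conjC tu expr1n.
have u_le : `|u| <= 2 * `|s|.
  by rewrite /u /z -{2}[t]mulr1 -mulrBr normrM tu mul1r norm_cayley_sub1.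
have u1 : `|u| <= 1.
  by apply: le_trans u_le _; rewrite mulrC -ler_pdivlMr // mul1r.
have u_tangent : `|u - 2 * 'i * s * t| <= 2 * `|s| ^+ 2.
  rewrite (_ : u - _ = t * (cayley s - 1 - 2 * 'i * s)); last by rewrite /u /z; ring.
  by rewrite normrM tu mul1r norm_cayley_tangent.
have u_sq : `|u| ^+ 2 <= 4 * `|s| ^+ 2.
  by rewrite (_ : 4 * _ = (2 * `|s|) ^+ 2) ?lerXn2r ?nnegrE ?mulr_ge0 //; ring.
have hz : `|h z| <= (`|al| + K) * `|u|.
  rewrite -[h z](subrK (al * u)) mulrDl addrC.
  apply: le_trans (ler_normD _ _) (lerD _ _); first by rewrite normrM.
  by apply: le_trans (h_expansion u1) _; rewrite ler_wpM2l // ler_iXnr.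
have conj_diff : `|z^* ^+ m - t^* ^+ m| <= m%:R * `|u|.
  have z1 : `|z| = 1 by rewrite normrM tu mul1r norm_cayley.
  apply: le_trans (norm_subX_le _ _ _) _; rewrite ?norm_conjC ?z1 ?tu //.
  by rewrite -rmorphB norm_conjC.
have -> : z^* ^+ m * h z - t^* ^+ m * al * (2 * 'i * t) * s =
    (z^* ^+ m - t^* ^+ m) * h z + t^* ^+ m * (h z - al * u)
    + t^* ^+ m * al * (u - 2 * 'i * s * t) by rewrite /u; ring.
rewrite [X in _ <= X]mulrDl [X in _ <= X + _]mulrDl.
apply: le_trans (ler_normD _ _) (lerD (le_trans (ler_normD _ _) (lerD _ _)) _).
- rewrite normrM; apply: le_trans (ler_pM _ _ conj_diff hz) _ => //.
  by rewrite mulrACA -expr2 -[X in _ <= X]mulrA ler_wpM2l ?mulr_ge0 ?addr_ge0.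
- rewrite normrM tm1 mul1r; apply: le_trans (h_expansion u1) _.
  by rewrite -mulrA ler_wpM2l.
- by rewrite !normrM tm1 mul1r -[X in _ <= X]mulrA ler_wpM2l.
Qed.

Lemma circle_linear_part_eq0 : (forall z, `|z| = 1 -> 0 <= z^* ^+ m * h z) -> al = 0.
Proof.
move=> h_nonneg.
have K'0 : 0 <= m%:R * (`|al| + K) * 4 + K * 4 + `|al| * 2.
  by rewrite !addr_ge0 ?mulr_ge0 ?addr_ge0.
have half0 : 0 < 2^-1 :> C by rewrite invr_gt0 ltr0n.
have beta0 : t^* ^+ m * al * (2 * 'i * t) = 0.
  apply: (linear_part_eq0 (g := fun s => (t * cayley s)^* ^+ m * h (t * cayley s))
    half0 K'0) => s sR s_small.
  split; last exact: circle_chart_expansion.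
  by apply: h_nonneg; rewrite normrM tu mul1r norm_cayley.
have t0 : t != 0 by rewrite -normr_eq0 tu oner_eq0.
have tm0 : t^* ^+ m != 0 by rewrite expf_neq0 ?conjC_eq0.
have it0 : 2 * 'i * t != 0 by rewrite !mulf_neq0 ?neq0Ci ?pnatr_eq0.
by move/eqP: beta0; rewrite -mulrA mulf_eq0 (negbTE tm0) /= mulf_eq0 (negbTE it0) orbF => /eqP.
Qed.

End CircleDerivative.

Lemma torus_linear_part_fst_eq0 (C : numClosedFieldType) (f : C -> C -> C)
    (t1 t2 a1 a2 K : C) (m n : nat) :
  `|t1| = 1 -> `|t2| = 1 -> 0 <= K ->
  (forall x y, `|x - t1| + `|y - t2| <= 1 ->
     `|f x y - (a1 * (x - t1) + a2 * (y - t2))| <= K * (`|x - t1| + `|y - t2|) ^+ 2) ->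
  (forall x y, `|x| = 1 -> `|y| = 1 -> 0 <= x^* ^+ m * y^* ^+ n * f x y) ->
  a1 = 0.
Proof.
move=> t1u t2u K0 f_exp f_nonneg.
have t2n0 : t2^* ^+ n != 0.
  by rewrite expf_neq0 // conjC_eq0 -normr_eq0 t2u oner_eq0.
apply: (mulfI t2n0); rewrite mulr0.
apply: (circle_linear_part_eq0 (h := fun x => t2^* ^+ n * f x t2) (m := m) t1u K0).
  move=> z zt1; have := f_exp z t2; rewrite subrr normr0 !addr0 mulr0 addr0.
  rewrite -mulrA -mulrBr normrM normrX norm_conjC t2u expr1n mul1r; exact.
by move=> z z1; rewrite mulrA; apply: f_nonneg.
Qed.

Lemma torus_linear_part_eq0 (C : numClosedFieldType) (f : C -> C -> C)
    (t1 t2 a1 a2 K : C) (m n : nat) :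
  `|t1| = 1 -> `|t2| = 1 -> 0 <= K ->
  (forall x y, `|x - t1| + `|y - t2| <= 1 ->
     `|f x y - (a1 * (x - t1) + a2 * (y - t2))| <= K * (`|x - t1| + `|y - t2|) ^+ 2) ->
  (forall x y, `|x| = 1 -> `|y| = 1 -> 0 <= x^* ^+ m * y^* ^+ n * f x y) ->
  a1 = 0 /\ a2 = 0.
Proof.
move=> t1u t2u K0 f_exp f_nonneg; split; first exact: torus_linear_part_fst_eq0 f_exp f_nonneg.
apply: (torus_linear_part_fst_eq0 (f := fun y x => f x y) (a2 := a1) (m := n) (n := m)
  t2u t1u K0) => [y x | y x y1 x1]; first by rewrite addrC [a2 * _ + _]addrC; apply: f_exp.
by rewrite [_ ^+ n * _]mulrC; apply: f_nonneg.
Qed.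

Section Reflection.
Variables (R : realType) (m n : nat).
Local Notation C := R[i].
Implicit Types (b : coef3 R m n) (x y w : C).

Lemma peval3E b x y w : peval3 b x y w = pk b 0 x y + w * pk b 1 x y.
Proof.
rewrite /peval3 /pk mulr_sumr -big_split; apply: eq_bigr => i _.
rewrite mulr_sumr -big_split; apply: eq_bigr => j _.
rewrite big_ord_recr big_ord1 /= expr0 expr1 mulr1 [w * _]mulrC.
have -> : widen_ord (leqnSn 1) ord0 = 0 :> 'I_2 by apply/val_inj.
by have -> : ord_max = 1 :> 'I_2 by apply/val_inj.
Qed.

Lemma pk_refl3_torus b k x y : `|x| = 1 -> `|y| = 1 ->
  pk (refl3 b) k x y = x ^+ m * y ^+ n * (pk b (rev_ord k) x y)^*.
Proof.
move=> x1 y1.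
have xK : x^* * x = 1 by rewrite -normCKC x1 expr1n.
have yK : y^* * y = 1 by rewrite -normCKC y1 expr1n.
rewrite /pk /refl3 rmorph_sum mulr_sumr (reindex_inj rev_ord_inj) /=.
apply: eq_bigr => i _; rewrite rmorph_sum mulr_sumr (reindex_inj rev_ord_inj) /=.
apply: eq_bigr => j _; rewrite !rev_ordK !rmorphM !rmorphXn /= !subSS.
have -> : x ^+ m = x ^+ (m - i) * x ^+ i by rewrite -exprD subnK // -ltnS.
have -> : y ^+ n = y ^+ (n - j) * y ^+ j by rewrite -exprD subnK // -ltnS.
rewrite -[LHS]mulr1 -(expr1n _ i) -{1}xK -[LHS]mulr1 -(expr1n _ j) -{1}yK !exprMn.
ring.
Qed.

Lemma norm_pk_refl3_torus b k x y : `|x| = 1 -> `|y| = 1 ->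
  `|pk (refl3 b) k x y| = `|pk b (rev_ord k) x y|.
Proof.
move=> x1 y1; rewrite pk_refl3_torus // !normrM !normrX x1 y1 !expr1n !mul1r.
exact: norm_conjC.
Qed.

Lemma norm_pk0_eq_pk1_at_zero b x y w : `|w| = 1 -> peval3 b x y w = 0 ->
  `|pk b 0 x y| = `|pk b 1 x y|.
Proof.
by move=> w1 /eqP; rewrite peval3E addr_eq0 => /eqP ->; rewrite normrN normrM w1 mul1r.
Qed.

Lemma pk0_neq0_at_zero b (zs : seq (C * C * C)) x y w :
  (forall z1 z2 z3, `|z1| = 1 -> `|z2| = 1 -> `|z3| = 1 -> peval3 b z1 z2 z3 = 0 ->
     (z1, z2, z3) \in zs) ->
  `|x| = 1 -> `|y| = 1 -> `|w| = 1 -> peval3 b x y w = 0 -> pk b 0 x y != 0.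
Proof.
move=> zs_all x1 y1 w1 zero; apply/eqP => p0_eq0.
have p1_eq0 : pk b 1 x y = 0.
  by apply/normr0_eq0; rewrite -(norm_pk0_eq_pk1_at_zero w1 zero) p0_eq0 normr0.
have [v v1 /negP] := unit_circle_notin (map (fun z => z.2) zs); apply; apply/mapP.
by exists (x, y, v); rewrite // zs_all // peval3E p0_eq0 p1_eq0 mulr0 addr0.
Qed.

Definition pk_cross b x y :=
  pk b 0 x y * pk (refl3 b) 1 x y - pk b 1 x y * pk (refl3 b) 0 x y.

Lemma phi3E b x y w : pk b 0 x y != 0 -> peval3 b x y w != 0 ->
  phi3 b x y w = pk (refl3 b) 0 x y / pk b 0 x y
                 + w * pk_cross b x y / (pk b 0 x y * peval3 b x y w).
Proof.
move=> p1_neq0; rewrite /phi3 /pk_cross !peval3E => p_neq0.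
by field; rewrite p1_neq0 p_neq0.
Qed.

Lemma pk_cross_torus b x y : `|x| = 1 -> `|y| = 1 ->
  pk_cross b x y = x ^+ m * y ^+ n * (`|pk b 0 x y| ^+ 2 - `|pk b 1 x y| ^+ 2).
Proof.
move=> x1 y1; rewrite /pk_cross !pk_refl3_torus // !normCK.
have -> : rev_ord (1 : 'I_2) = 0 by apply/val_inj.
have -> : rev_ord (0 : 'I_2) = 1 by apply/val_inj.
ring.
Qed.

Lemma quad_expansion_pk b k t1 t2 : quad_expansion t1 t2 (pk b k).
Proof.
apply: quad_expansion_sum => i; apply: quad_expansion_sum => j.
apply: quad_expansionM; last exact: quad_expansionX (quad_expansion_snd _ _).
exact: quad_expansionM (quad_expansion_cst _ _ _) (quad_expansionX _ (quad_expansion_fst _ _)).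
Qed.

Lemma quad_expansion_pk_cross b t1 t2 : quad_expansion t1 t2 (pk_cross b).
Proof.
apply: (quad_expansion_ext (f := fun x y => pk b 0 x y * pk (refl3 b) 1 x y
   + (-1) * (pk b 1 x y * pk (refl3 b) 0 x y))) => [x y|].
  by rewrite mulN1r.
have pkM k l : quad_expansion t1 t2 (fun x y => pk b k x y * pk (refl3 b) l x y).
  exact: quad_expansionM (quad_expansion_pk _ _ _ _) (quad_expansion_pk _ _ _ _).
exact: quad_expansionD (pkM _ _) (quad_expansionM (quad_expansion_cst _ _ _) (pkM _ _)).
Qed.

End Reflection.

Lemma norm_tail_le (D : numFieldType) (w F P Q K c A e : D) :
  0 < A -> 0 <= K -> 0 < c -> `|w| < 1 -> 0 <= e ->
  `|F| <= K * e ^+ 2 -> e <= c * (1 - `|w|) ->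
  A <= `|P| * 2 -> `|P| * (1 - `|w|) <= `|Q| ->
  `|w * F / (P * Q)| <= K * c * 4 / A ^+ 2 * e.
Proof.
move=> A0 K0 c0 w1 e0 F_le e_cone P_ge Q_ge.
have w1' : 0 < 1 - `|w| by rewrite subr_gt0.
have P0 : 0 < `|P| by rewrite -(pmulr_lgt0 _ (ltr0n _ 2)) (lt_le_trans A0).
have Q0 : 0 < `|Q| by apply: lt_le_trans Q_ge; rewrite mulr_gt0.
rewrite normf_div ler_pdivrMr ?normrM ?mulr_gt0 //.
have wF : `|w| * `|F| <= K * e * (c * (1 - `|w|)).
  apply: le_trans (_ : _ <= `|F|) _; first by rewrite ler_piMl // ltW.
  by apply: le_trans F_le _; rewrite expr2 [K * (e * e)]mulrA ler_wpM2l ?mulr_ge0.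
apply: le_trans wF _.
have -> : K * e * (c * (1 - `|w|)) = K * c * 4 / A ^+ 2 * e * (A ^+ 2 / 4 * (1 - `|w|)).
  by field; rewrite gt_eqF.
have M_ge0 : 0 <= K * c * 4 / A ^+ 2.
  by apply: divr_ge0; rewrite ?exprn_ge0 ?mulr_ge0 // ltW.
apply: ler_wpM2l; first exact: mulr_ge0 M_ge0 e0.
apply: le_trans (ler_wpM2l (ltW P0) Q_ge).
rewrite mulrA ler_wpM2r ?(ltW w1') // ler_pdivrMr ?ltr0n //.
rewrite (_ : _ * _ * 4 = (`|P| * 2) ^+ 2); last by ring.
by rewrite expr2 ler_pM ?(ltW A0).
Qed.

Section ZeroFreeOnTridisk.
Variables (R : realType) (m n : nat) (a : coef3 R m n).
Local Notation C := R[i].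
Hypothesis p_neq0 :
  forall x y w : C, `|x| < 1 -> `|y| < 1 -> `|w| < 1 -> peval3 a x y w != 0.

Lemma norm_pk1_le_pk0_open (x y : C) : `|x| < 1 -> `|y| < 1 ->
  `|pk a 1 x y| <= `|pk a 0 x y|.
Proof.
move=> x1 y1; rewrite real_leNgt ?normr_real //; apply/negP => lt_p01.
have p1_neq0 : pk a 1 x y != 0 by rewrite -normr_gt0 (le_lt_trans _ lt_p01).
have w1 : `|- (pk a 0 x y / pk a 1 x y)| < 1.
  by rewrite normrN normf_div ltr_pdivrMr ?normr_gt0 // mul1r.
by have := p_neq0 x1 y1 w1; rewrite peval3E mulNr divfK // subrr eqxx.
Qed.

Lemma norm_peval3_ge (x y w : C) : `|x| < 1 -> `|y| < 1 ->
  `|pk a 0 x y| * (1 - `|w|) <= `|peval3 a x y w|.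
Proof.
move=> x1 y1; rewrite peval3E mulrBr mulr1; apply: le_trans (lerB_normD _ _).
by rewrite lerB // normrM mulrC ler_wpM2r ?norm_pk1_le_pk0_open.
Qed.

Lemma norm_pk1_le_pk0 (x y : C) : `|x| <= 1 -> `|y| <= 1 ->
  `|pk a 1 x y| <= `|pk a 0 x y|.
Proof.
move=> x1 y1; rewrite -subr_le0.
have [L0 L00 p0L] := quad_expansion_lipschitz (quad_expansion_pk a 0 x y).
have [L1 L10 p1L] := quad_expansion_lipschitz (quad_expansion_pk a 1 x y).
have half0 : 0 < 2^-1 :> C by rewrite invr_gt0 ltr0n.
apply: (le0_of_le_small (K := (L0 + L1) * 2) half0) => [|e e0 e_half].
  by rewrite mulr_ge0 ?addr_ge0.
have e1 : e < 1 by apply: le_lt_trans e_half _; rewrite invf_lt1 ?ltr1n.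
have shrink v : `|v| <= 1 -> `|(1 - e) * v| < 1 /\ `|(1 - e) * v - v| <= e.
  move=> v1; rewrite (_ : (1 - e) * v - v = - (e * v)); last by ring.
  have e1' : 0 <= 1 - e by rewrite subr_ge0 ltW.
  rewrite normrN !normrM (ger0_norm e1') (gtr0_norm e0).
  split; last by rewrite ler_piMr ?(ltW e0).
  by apply: le_lt_trans (ler_piMr _ v1) _; rewrite // gtrBl.
have [x'1 dx] := shrink x x1; have [y'1 dy] := shrink y y1.
set x' := (1 - e) * x in x'1 dx *; set y' := (1 - e) * y in y'1 dy *.
have d_le : `|x' - x| + `|y' - y| <= e * 2 by rewrite mulr_natr mulr2n lerD.
have d1 : `|x' - x| + `|y' - y| <= 1.
  by apply: le_trans d_le _; rewrite -ler_pdivlMr ?ltr0n // mul1r.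
have -> : `|pk a 1 x y| - `|pk a 0 x y| =
    (`|pk a 1 x y| - `|pk a 1 x' y'|) + (`|pk a 1 x' y'| - `|pk a 0 x' y'|)
    + (`|pk a 0 x' y'| - `|pk a 0 x y|) by ring.
have open_le := norm_pk1_le_pk0_open x'1 y'1; rewrite -subr_le0 in open_le.
apply: le_trans (lerD (lerD (lerB_dist _ _) open_le) (lerB_dist _ _)) _.
rewrite addr0 distrC.
apply: le_trans (lerD (p1L _ _ d1) (p0L _ _ d1)) _.
rewrite -mulrDl addrC -mulrA ler_wpM2l ?addr_ge0 //.
by apply: le_trans d_le _; rewrite mulrC.
Qed.

Lemma pk_cross_quadratic (t1 t2 : C) : `|t1| = 1 -> `|t2| = 1 ->
  `|pk a 0 t1 t2| = `|pk a 1 t1 t2| ->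
  exists2 K, 0 <= K & forall x y, `|x - t1| + `|y - t2| <= 1 ->
    `|pk_cross a x y| <= K * (`|x - t1| + `|y - t2|) ^+ 2.
Proof.
move=> t1u t2u p0_p1.
have [a1 [a2 [K [K0 cross_exp]]]] := quad_expansion_pk_cross a t1 t2.
have cross0 : pk_cross a t1 t2 = 0 by rewrite pk_cross_torus // p0_p1 subrr mulr0.
rewrite cross0 in cross_exp; setoid_rewrite subr0 in cross_exp.
have [a10 a20] : a1 = 0 /\ a2 = 0.
  apply: (torus_linear_part_eq0 (m := m) (n := n) t1u t2u K0 cross_exp) => x y x1 y1.
  rewrite pk_cross_torus //.
  set G := _ - _; have -> : x^* ^+ m * y^* ^+ n * (x ^+ m * y ^+ n * G) =
      (x^* * x) ^+ m * (y^* * y) ^+ n * G by rewrite !exprMn; ring.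
  rewrite -!normCKC x1 y1 !expr1n !mul1r subr_ge0 !expr2.
  by rewrite ler_pM // norm_pk1_le_pk0 ?x1 ?y1.
exists K => // x y dxy.
by have := cross_exp x y dxy; rewrite a10 a20 !mul0r addr0 subr0.
Qed.

Lemma phi3_deviation_linear (t1 t2 c K : C) : 0 < c -> pk a 0 t1 t2 != 0 -> 0 <= K ->
  (forall x y, `|x - t1| + `|y - t2| <= 1 ->
     `|pk_cross a x y| <= K * (`|x - t1| + `|y - t2|) ^+ 2) ->
  exists2 d, 0 < d & exists2 M, 0 <= M & forall x y w,
    `|x| < 1 -> `|y| < 1 -> `|w| < 1 ->
    `|x - t1| + `|y - t2| <= d -> `|x - t1| + `|y - t2| <= c * (1 - `|w|) ->
    `|phi3 a x y w - pk (refl3 a) 0 t1 t2 / pk a 0 t1 t2|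
      <= M * (`|x - t1| + `|y - t2|).
Proof.
move=> c0 p0_neq0 K0 cross_bound; set A := `|pk a 0 t1 t2|.
have A0 : 0 < A by rewrite normr_gt0.
have [d1 /andP [d10 d11] [M1 M10 quot_lip]] := quad_expansion_div_lipschitz
  (quad_expansion_pk (refl3 a) 0 t1 t2) (quad_expansion_pk a 0 t1 t2) p0_neq0.
have [d2 /andP [d20 _] p0_lower] :=
  quad_expansion_norm_lower (quad_expansion_pk a 0 t1 t2) p0_neq0.
have cmp_d : d1 >=< d2 by rewrite real_comparable ?gtr0_real.
exists (Num.min d1 d2); first by rewrite comparable_lt_min ?d10.
have M2_ge0 : 0 <= K * c * 4 / A ^+ 2.
  by apply: divr_ge0; rewrite ?exprn_ge0 ?mulr_ge0 // ltW.
exists (M1 + K * c * 4 / A ^+ 2); first by rewrite addr_ge0.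
move=> x y w x1 y1 w1; set e := `|x - t1| + `|y - t2| => e_d e_cone.
have e0 : 0 <= e by rewrite addr_ge0.
have e_d1 : e <= d1 by move: e_d; rewrite comparable_le_min // => /andP [].
have e_d2 : e <= d2 by move: e_d; rewrite comparable_le_min // => /andP [].
have e1 : e <= 1 := le_trans e_d1 d11.
have p0xy0 : pk a 0 x y != 0.
  by rewrite -normr_gt0 -(pmulr_lgt0 _ (ltr0n _ 2)) (lt_le_trans A0) ?p0_lower.
rewrite phi3E ?p_neq0 // addrAC mulrDl.
apply: le_trans (ler_normD _ _) (lerD (quot_lip _ _ e_d1) _).
by rewrite norm_tail_le ?p0_lower ?norm_peval3_ge // cross_bound.
Qed.

End ZeroFreeOnTridisk.

Lemma nrm3_ge (R : realType) (z1 z2 z3 : R[i]) :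
  [/\ `|z1| <= nrm3 z1 z2 z3, `|z2| <= nrm3 z1 z2 z3 & `|z3| <= nrm3 z1 z2 z3].
Proof.
have cmp (u v : R[i]) : u \is Num.real -> v \is Num.real -> u >=< v.
  exact: real_comparable.
by rewrite /nrm3 !comparable_le_max ?lexx ?orbT ?cmp ?max_real ?normr_real.
Qed.

Lemma nt_limit_of_linear_deviation (R : realType) (f : R[i] -> R[i] -> R[i] -> R[i])
    (t1 t2 t3 L : R[i]) :
  (forall c, 0 < c -> exists2 d, 0 < d & exists2 M, 0 <= M & forall x y w,
     `|x| < 1 -> `|y| < 1 -> `|w| < 1 ->
     `|x - t1| + `|y - t2| <= d -> `|x - t1| + `|y - t2| <= c * (1 - `|w|) ->
     `|f x y w - L| <= M * (`|x - t1| + `|y - t2|)) ->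
  nt_limit f t1 t2 t3 L.
Proof.
move=> deviation c c0 eps eps0.
have [d d0 [M M0 fM]] := deviation (c * 2) (mulr_gt0 c0 (ltr0n _ 2)).
have M1 : 0 < (M + 1) * 2 by rewrite mulr_gt0 ?ltr_wpDl ?ltr0n.
have cmp : d / 2 >=< eps / ((M + 1) * 2).
  by rewrite real_comparable ?gtr0_real ?divr_gt0 ?ltr0n.
exists (Num.min (d / 2) (eps / ((M + 1) * 2))).
  by rewrite comparable_lt_min // !divr_gt0 ?ltr0n.
move=> x y w x1 y1 w1; set N := nrm3 _ _ _.
rewrite comparable_lt_min // => cone /andP [Nd Neps].
have [Nx Ny _] := nrm3_ge (x - t1) (y - t2) (w - t3).
have [_ _ wN] := nrm3_ge x y w.
set e := `|x - t1| + `|y - t2|.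
have e_N : e <= N * 2 by rewrite mulr_natr mulr2n lerD.
have e_d : e <= d.
  by apply: le_trans e_N _; rewrite -ler_pdivlMr ?ltr0n // ltW.
have e_cone : e <= c * 2 * (1 - `|w|).
  apply: le_trans e_N _; rewrite mulrAC ler_wpM2r //.
  by apply: le_trans cone _; rewrite ler_wpM2l ?(ltW c0) // lerB.
apply: le_lt_trans (fM _ _ _ x1 y1 w1 e_d e_cone) _.
apply: le_lt_trans (_ : _ <= (M + 1) * (N * 2)) _.
  have N0 : 0 <= N := le_trans (normr_ge0 _) Nx.
  by apply: le_trans (ler_wpM2l M0 e_N) _; rewrite ler_wpM2r ?mulr_ge0 // lerDl.
by rewrite mulrCA -ltr_pdivlMr.
Qed.

Theorem corollary4p3 (R : realType) (m n : nat) (a : coef3 R m n) :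
  (* p has no zeros on the tridisk *)
  (forall z1 z2 z3 : R[i], `|z1| < 1 -> `|z2| < 1 -> `|z3| < 1 ->
     peval3 a z1 z2 z3 != 0) ->
  (* p and tilde p have no common factor *)
  no_common_factor a ->
  (* Z_p /\ T^3 is finite *)
  (exists s : seq (R[i] * R[i] * R[i]), forall z1 z2 z3 : R[i],
     `|z1| = 1 -> `|z2| = 1 -> `|z3| = 1 -> peval3 a z1 z2 z3 = 0 ->
     (z1, z2, z3) \in s) ->
  forall t1 t2 zeta3 : R[i], `|t1| = 1 -> `|t2| = 1 -> `|zeta3| = 1 ->
  peval3 a t1 t2 zeta3 = 0 ->
  forall t3 : R[i], `|t3| = 1 ->
    nt_limit (phi3 a) t1 t2 t3 (pk (refl3 a) 0 t1 t2 / pk a 0 t1 t2) /\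
    `|pk (refl3 a) 0 t1 t2 / pk a 0 t1 t2| = 1.
Proof.
move=> p_neq0 _ [zs zs_all] t1 t2 z3 t1u t2u z3u zero t3 _.
have p0_p1 := norm_pk0_eq_pk1_at_zero z3u zero.
have p0_neq0 := pk0_neq0_at_zero zs_all t1u t2u z3u zero.
have [K K0 cross_bound] := pk_cross_quadratic p_neq0 t1u t2u p0_p1.
split.
  apply: nt_limit_of_linear_deviation => c c0.
  by have := phi3_deviation_linear p_neq0 c0 p0_neq0 K0 cross_bound.
rewrite normf_div norm_pk_refl3_torus //.
have -> : rev_ord (0 : 'I_2) = 1 by apply/val_inj.
by rewrite -p0_p1 divff // normr_eq0.
Qed.
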